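(* Let $R$ be a commutative domain with unit, let $f\in R$ be nonzero and non-invertible, and let $S=R[u,v]/(uv-f)$. Then the following are equivalent: the image of $u$ is a prime element of $S$; the image of $v$ is a prime element of $S$; $f$ is a prime element of $R$.
   Context: A nonzero non-invertible element $r$ of a domain is prime if whenever $r$ divides a product $ab$, it divides $a$ or $b$. *)

From HB Require Import structures.
From mathcomp Require Import all_boot all_algebra ring_quotient.
From mathcomp Require Import boolp.

Set Implicit Arguments.
Unset Strict Implicit.
Unset Printing Implicit Defensive.

Import GRing.Theory.
Local Open Scope ring_scope.
Local Open Scope quotient_scope.

Definition dvd_elt (S : comNzRingType) (a b : S) : Prop := exists c, b = a * c.
Definition invertible_elt (S : comNzRingType) (a : S) : Prop := exists c, a * c = 1.
Definition prime_elt (S : comNzRingType) (r : S) : Prop :=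
  [/\ r != 0, ~ invertible_elt r &
      forall a b, dvd_elt r (a * b) -> dvd_elt r a \/ dvd_elt r b].

(* R[u,v] is modelled as {poly {poly R}}: u = 'X (outer variable),
   v = 'X%:P (inner variable, as a constant of the outer ring). *)
Section UVF.
Variables (R : idomainType) (f : R).

Definition var_u : {poly {poly R}} := 'X.
Definition var_v : {poly {poly R}} := ('X)%:P.

Definition uvf : {poly {poly R}} := var_u * var_v - (f%:P)%:P.

Definition uvf_ideal : {pred {poly {poly R}}} :=
  fun p => `[< exists q, p = q * uvf >].

Lemma size_uvf : size uvf = 2%N.
Proof.
rewrite /uvf /var_u /var_v mulrC -polyCN size_MXaddC.
by rewrite polyC_eq0 polyX_eq0 /= size_polyC polyX_eq0.
Qed.

Lemma uvf_ideal_closed : idealr_closed uvf_ideal.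
Proof.
split.
- by apply/asboolP; exists 0; rewrite mul0r.
- apply/negP => /asboolP [q Hq].
  have q0 : q != 0.
    by apply/eqP => q0; move: Hq; rewrite q0 mul0r => /eqP; rewrite oner_eq0.
  have u0 : uvf != 0 by rewrite -size_poly_eq0 size_uvf.
  have := congr1 (fun p : {poly {poly R}} => size p) Hq.
  rewrite size_poly1 size_mul // size_uvf addn2 /=.
  simpl; move=> /eqP; rewrite eq_sym eqSS.
  by apply/negP; rewrite size_poly_eq0.
- move=> a u v /asboolP [qu ->] /asboolP [qv ->].
  by apply/asboolP; exists (a * qu + qv); rewrite mulrDl mulrA.
Qed.

HB.instance Definition _ := isIdealr.Build _ uvf_ideal uvf_ideal_closed.

Definition Suvf := {ideal_quot uvf_ideal}.

Definition u_S : Suvf := \pi_Suvf var_u.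
Definition v_S : Suvf := \pi_Suvf var_v.

End UVF.

From HB Require Import structures.
From mathcomp Require Import all_boot all_algebra ring_quotient.
From mathcomp Require Import boolp ring.

Set Implicit Arguments.
Unset Strict Implicit.
Unset Printing Implicit Defensive.
Import GRing.Theory.
Local Open Scope ring_scope.
Local Open Scope quotient_scope.

(* Modulo u the relation uv = f reads f = 0, so S/(u) is R[v]/(f) = (R/(f))[v].
   Hence u is prime in S iff f is prime in R: restricting to constants gives one
   direction, and Gauss' lemma (f prime makes (R/(f))[v] a domain) the other.
   Exchanging u and v fixes uv - f, so it induces an automorphism of S mapping
   u to v. *)

Lemma invertible_eltE (S : comNzRingType) (x : S) :
  invertible_elt x <-> dvd_elt x 1.
Proof. by split=> -[c xc]; exists c. Qed.

Section PrimeEltTransfer.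
Variables (S T : comNzRingType) (g : S -> T) (h : T -> S).
Hypotheses (gK : cancel g h) (hK : cancel h g).
Hypotheses (gM : {morph g : x y / x * y}) (g1 : g 1 = 1) (g0 : g 0 = 0).

Lemma dvd_elt_mul_iso (a : S) (b : T) : dvd_elt (g a) b <-> dvd_elt a (h b).
Proof.
split=> -[c bc]; first by exists (h c); rewrite bc -{1}(hK c) -gM gK.
by exists (g c); rewrite -gM -bc hK.
Qed.

Lemma prime_elt_mul_iso (x : S) : prime_elt x -> prime_elt (g x).
Proof.
have hM : {morph h : x y / x * y} by move=> a b; rewrite -[a]hK -[b]hK -gM !gK.
case=> x0 x_ninv x_prime; split.
- by apply: contra x0 => /eqP; rewrite -g0 => /(can_inj gK) ->.
- by move=> /invertible_eltE /dvd_elt_mul_iso; rewrite -g1 gK => /invertible_eltE.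
- by move=> a b; rewrite !dvd_elt_mul_iso hM; apply: x_prime.
Qed.

End PrimeEltTransfer.

Section PolyDvd.
Variable R : comNzRingType.

Lemma dvd_elt_polyC (a b : R) : dvd_elt a%:P b%:P <-> dvd_elt a b.
Proof.
split=> -[c bc]; last by exists c%:P; rewrite bc polyCM.
by exists c`_0; rewrite -coefCM -bc coefC.
Qed.

Lemma dvd_elt_polyCP (a : R) (p : {poly R}) :
  dvd_elt a%:P p <-> forall i, dvd_elt a p`_i.
Proof.
split=> [[c ->] i|]; first by exists c`_i; rewrite coefCM.
move=> /choice[c pc]; exists (\poly_(i < size p) c i); apply/polyP=> i.
rewrite coefCM coef_poly; case: ltnP => // le_p_i.
by rewrite mulr0 nth_default.
Qed.

End PolyDvd.

Lemma mul_poly_eq0 (R : nzRingType)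
    (R_domain : forall x y : R, x * y = 0 -> (x == 0) || (y == 0))
    (p q : {poly R}) :
  p * q = 0 -> (p == 0) || (q == 0).
Proof.
have [->|p0] := eqVneq p 0; first by [].
have [->|q0 /=] := eqVneq q 0; first by rewrite orbT.
have lpq0 : lead_coef p * lead_coef q != 0.
  by apply/negP=> /eqP /R_domain; rewrite !lead_coef_eq0 (negPf p0) (negPf q0).
move=> pq0; have := lead_coef_proper_mul lpq0.
by rewrite pq0 lead_coef0 => lpq; rewrite -lpq eqxx in lpq0.
Qed.

Section PrimePolyC.
Variables (R : comNzRingType) (f : R).
Hypothesis f_prime : prime_elt f.

Definition multiples : {pred R} := fun x => `[< dvd_elt f x >].

Lemma multiples_idealr_closed : idealr_closed multiples.
Proof.
case: f_prime => _ f_ninv _; split.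
- by apply/asboolP; exists 0; rewrite mulr0.
- by apply/negP=> /asboolP[c f1]; apply: f_ninv; exists c.
- move=> a x y /asboolP[cx ->] /asboolP[cy ->]; apply/asboolP.
  by exists (a * cx + cy); rewrite mulrDr mulrCA.
Qed.

Lemma multiples_prime : prime_idealr_closed multiples.
Proof.
case: f_prime => _ _ fM x y /asboolP/fM.
by case=> fd; apply/orP; [left|right]; apply/asboolP.
Qed.

HB.instance Definition _ := isIdealr.Build R multiples multiples_idealr_closed.
HB.instance Definition _ := isPrimeIdealrClosed.Build R multiples multiples_prime.

Local Notation Q := {ideal_quot multiples}.

Lemma pi_multiples_eq0 (x : R) : \pi_Q x = 0 <-> dvd_elt f x.
Proof.
have -> : (0 : Q) = \pi_Q 0 by rewrite raddf0.
split=> [/eqP|fx]; first by rewrite -Quotient.idealrBE subr0 => /asboolP.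
by apply/eqP; rewrite -Quotient.idealrBE subr0; apply/asboolP.
Qed.

Lemma map_pi_multiples_eq0 (p : {poly R}) :
  map_poly \pi_Q p = 0 <-> dvd_elt f%:P p.
Proof.
rewrite dvd_elt_polyCP; split=> [pf0 i|pf].
  by apply/pi_multiples_eq0; rewrite -coef_map pf0 coef0.
by apply/polyP=> i; rewrite coef_map coef0; apply/pi_multiples_eq0.
Qed.

Lemma prime_elt_polyC : prime_elt f%:P.
Proof.
case: (f_prime) => f0 f_ninv _; split.
- by rewrite polyC_eq0.
- by move=> /invertible_eltE; rewrite -polyC1 dvd_elt_polyC => /invertible_eltE.
move=> a b /map_pi_multiples_eq0; rewrite rmorphM /= => /mul_poly_eq0.
by case/(_ (@Quotient.rquot_IdomainAxiom _ _))/orP=> /eqP/map_pi_multiples_eq0; auto.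
Qed.

End PrimePolyC.

Section UVF.
Variables (R : idomainType) (f : R).
Local Notation S := (Suvf f).
Local Notation PP := {poly {poly R}}.

Lemma piS_eqP (p q : PP) : \pi_S p = \pi_S q <-> exists r, p - q = r * uvf f.
Proof.
split=> [/eqP|/asboolP pq]; first by rewrite -Quotient.idealrBE => /asboolP.
by apply/eqP; rewrite -Quotient.idealrBE.
Qed.

Lemma coef0_uvf : (uvf f)`_0 = - f%:P.
Proof. by rewrite /uvf /var_u /var_v coefB mulrC coefMX !coefC /= sub0r. Qed.

Lemma dvd_u_S (p : PP) : dvd_elt (u_S f) (\pi_S p) <-> dvd_elt f%:P p`_0.
Proof.
split=> [[c]|[q p0]].
  rewrite -[c]reprK -rmorphM => /piS_eqP[r /(congr1 (fun p : PP => p`_0))].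
  rewrite coefB !coef0M /var_u coefX mul0r subr0 coef0_uvf => ->.
  by exists (- r`_0); rewrite !mulrN mulrC.
have [p1 ep] : exists p1, p = p1 * 'X + (p`_0)%:P.
  have /factor_theorem[p1 ep] : root (p - (p`_0)%:P) 0.
    by rewrite /root hornerD hornerN hornerC horner_coef0 subrr.
  by exists p1; rewrite -[in RHS](subr0 'X) -polyC0 -ep subrK.
exists (\pi_S (p1 + var_v R * q%:P)); rewrite -rmorphM; apply/piS_eqP.
exists (- q%:P); rewrite {1}ep p0 polyCM /uvf /var_u /var_v; ring.
Qed.

Lemma dvd_u_S_polyC (c : R) :
  dvd_elt (u_S f) (\pi_S c%:P%:P) <-> dvd_elt f c.
Proof. by rewrite dvd_u_S coefC /= dvd_elt_polyC. Qed.

Lemma invertible_u_S : invertible_elt (u_S f) <-> invertible_elt f.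
Proof. by rewrite !invertible_eltE -dvd_u_S_polyC !polyC1 rmorph1. Qed.

Lemma u_S_neq0 : f != 0 -> u_S f != 0.
Proof.
move=> f0; apply: contra f0 => /eqP; rewrite -(raddf0 \pi_S) => /piS_eqP[r].
move=> /(congr1 (fun p : PP => p.[f%:P].[1])) /=.
by rewrite /uvf /var_u /var_v !(hornerE, hornerX) subrr mulr0 subr0 => ->.
Qed.

Lemma prime_elt_u_S : f != 0 -> prime_elt (u_S f) <-> prime_elt f.
Proof.
move=> f0; split=> [[_ u_ninv u_prime]|f_prime].
  split=> [//||a b]; first by rewrite -invertible_u_S.
  rewrite -!dvd_u_S_polyC !polyCM rmorphM.
  by case/u_prime=> ?; [left|right].
have [_ f_ninv _] := f_prime; split; [exact: u_S_neq0|by rewrite invertible_u_S|].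
have [_ _ fP_prime] := prime_elt_polyC f_prime.
move=> x y; rewrite -[x]reprK -[y]reprK -rmorphM !dvd_u_S coef0M.
by case/fP_prime=> ?; [left|right].
Qed.

Lemma swapXY_uvf : swapXY (uvf f) = uvf f.
Proof.
rewrite /uvf /var_u /var_v rmorphB rmorphM /= swapXY_X !swapXY_polyC map_polyC /=.
by rewrite map_polyX mulrC.
Qed.

Definition swap_S (x : S) : S := \pi_S (swapXY (repr x)).

Lemma swap_S_pi (p : PP) : swap_S (\pi_S p) = \pi_S (swapXY p).
Proof.
have /piS_eqP[r er] := reprK (\pi_S p); apply/piS_eqP.
exists (swapXY r); rewrite -rmorphB er rmorphM; congr (_ * _); exact: swapXY_uvf.
Qed.

Lemma swap_SK : involutive swap_S.
Proof. by elim/quotW=> p; rewrite (swap_S_pi p) swap_S_pi swapXYK. Qed.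

Lemma swap_SM : {morph swap_S : x y / x * y}.
Proof.
elim/quotW=> p; elim/quotW=> q.
by rewrite -rmorphM (swap_S_pi (p * q)) (swap_S_pi p) (swap_S_pi q) !rmorphM.
Qed.

Lemma swap_S1 : swap_S 1 = 1.
Proof. by rewrite -(rmorph1 \pi_S) swap_S_pi !rmorph1. Qed.

Lemma swap_S0 : swap_S 0 = 0.
Proof. by rewrite -(raddf0 \pi_S) swap_S_pi !raddf0. Qed.

Lemma swap_S_u : swap_S (u_S f) = v_S f.
Proof. by rewrite swap_S_pi swapXY_X. Qed.

Lemma prime_elt_v_S : prime_elt (v_S f) <-> prime_elt (u_S f).
Proof.
have swap_prime := prime_elt_mul_iso swap_SK swap_SK swap_SM swap_S1 swap_S0.
by split=> /swap_prime; rewrite -swap_S_u ?swap_SK.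
Qed.

End UVF.

Theorem proposition1p6 (R : idomainType) (f : R)
    (hf0 : f != 0) (hfu : f \isn't a GRing.unit) :
  [<-> prime_elt (u_S f); prime_elt (v_S f); prime_elt f].
Proof.
have u_prime := prime_elt_u_S hf0; have v_prime := prime_elt_v_S f.
by tfae; tauto.
Qed.
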